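(* Fix a class index $k$, an iteration $t$, data $S_1,\dots,S_N$, weights $r^{(t)}_{nk}\ge 0$, and a tuning parameter $\rho>0$. For a coefficient vector $\boldsymbol B_k\in\mathbb R^H$ let $\hat\mu^{(t)}_\phi(\boldsymbol B_k)$ be the solution $\mu$ of $$\sum_{n=1}^N r^{(t)}_{nk}\,L(S_n)\,\phi_\rho\Big(\log\mathrm{NHP}(S_n\mid\boldsymbol B_k)/L(S_n)-\mu\Big)=0.$$ Then the gradient $\varrho^{(t)}_k:=\frac{\partial\hat\mu^{(t)}_\phi(\boldsymbol B_k)}{\partial\boldsymbol B_k}\Big|_{\boldsymbol B_k^{(t-1)}}$ equals $$\sum_{n=1}^N\frac{r^{(t)}_{nk}w^{(t)}_{nk}}{\sum_{n'=1}^N r^{(t)}_{n'k}w^{(t)}_{n'k}L(S_{n'})}\cdot\frac{\partial\log\mathrm{NHP}(S_n\mid\boldsymbol B_k)}{\partial\boldsymbol B_k}\Big|_{\boldsymbol B_k^{(t-1)}},$$ where $w^{(t)}_{nk}=\phi_\rho'\Big(\log\mathrm{NHP}(S_n\mid\boldsymbol B^{(t-1)}_k)/L(S_n)-\hat\mu^{(t)}_\phi(\boldsymbol B^{(t-1)}_k)\Big)$.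
   Context: Event streams are observed over $L(S)$ periods of length $T$. Given periodic basis functions $\kappa_1,\dots,\kappa_H$ on $[0,T]$ (extended $T$-periodically) and $\boldsymbol B_k=(b_{k,1},\dots,b_{k,H})$, set $\lambda_k(t)=\sum_h b_{k,h}\kappa_h(t)$ and, for $S=(t_1,\dots,t_M)$, $\mathrm{NHP}(S\mid\boldsymbol B_k)=\prod_i\lambda_k(t_i)\exp\big(-\int_0^{L(S)T}\lambda_k(t)dt\big)$. The Catoni-type influence function is $\phi(x)=\log(1+x+x^2/2)$ for $0\le x\le 2$, $\phi(x)=\frac{0.032}{9}(x-9.5)^3+1.5+\log 5$ for $2<x\le 9.5$, $\phi(x)=1.5+\log 5$ for $x>9.5$, and $\phi(x)=-\phi(-x)$ for $x<0$; $\phi_\rho(x):=\rho^{-1}\phi(\rho x)$. *)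

From HB Require Import structures.
From mathcomp Require Import all_boot all_order all_algebra.
From mathcomp Require Import all_classical all_reals all_analysis.
Set Implicit Arguments. Unset Strict Implicit. Unset Printing Implicit Defensive.
Import Order.TTheory GRing.Theory Num.Theory.
Import numFieldNormedType.Exports.
Local Open Scope classical_set_scope.
Local Open Scope ring_scope.

Section Defs.
Variable R : realType.

(* Catoni-type influence function phi, on x >= 0 *)
Definition phi_pos (x : R) : R :=
  if x <= 2 then ln (1 + x + x ^+ 2 / 2)
  else if x <= 19 / 2 then (32 / 1000) / 9 * (x - 19 / 2) ^+ 3 + 3 / 2 + ln 5
  else 3 / 2 + ln 5.

Definition phi (x : R) : R := if 0 <= x then phi_pos x else - phi_pos (- x).

Definition phi_rho (rho : R) (x : R) : R := rho^-1 * phi (rho * x).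

(* lambda(t) = sum_h b_h kappa_h(t); kappa_h are given as T-periodic functions on R *)
Definition intensity (H : nat) (kappa : 'I_H -> R -> R) (B : 'rV[R]_H) (t : R) : R :=
  \sum_(h < H) B ord0 h * kappa h t.

Definition logNHP (H : nat) (kappa : 'I_H -> R -> R) (T : R) (L : nat)
    (S : seq R) (B : 'rV[R]_H) : R :=
  \sum_(ti <- S) ln (intensity kappa B ti)
  - \int[lebesgue_measure]_(x in `[0, L%:R * T]) intensity kappa B x.

Definition est_eq (N : nat) (rho : R) (r : 'I_N -> R) (L : 'I_N -> nat)
    (logl : 'I_N -> R) (mu : R) : R :=
  \sum_(n < N) r n * (L n)%:R * phi_rho rho (logl n / (L n)%:R - mu).

End Defs.

(* Along the line s |-> B0 + s e_h the estimating equation becomes the scalar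
   identity F(s) = sum_n r_n L_n phi_rho(l_n(s) / L_n - m(s)) = 0 near s = 0,
   where l_n is log NHP(S_n | .) and m is muhat along the line.  The Catoni
   function phi is differentiable everywhere: its pieces are smooth and their
   values and slopes agree at the junctions 0, 2 and 19/2.  Along the line,
   l_n(s) = sum_i ln(lambda_B0(t_i) + s kappa_h(t_i)) - (int lambda_B0 + s int kappa_h),
   which is differentiable because the intensity is positive at the events, and
   because the kappa_h, being T-periodic and integrable over one period, are
   integrable over [0, L T] by translation invariance of Lebesgue measure.
   Differentiating F at 0 by the chain rule gives
   0 = sum_n r_n L_n w_n (l_n'(0) / L_n - m'(0)), which is solved for m'(0). *)

From HB Require Import structures.
From mathcomp Require Import all_boot all_order all_algebra.
From mathcomp Require Import all_classical all_reals all_analysis measurable_realfun.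
From mathcomp Require Import ring lra.
Import Order.TTheory GRing.Theory Num.Theory.
Import numFieldNormedType.Exports.
Local Open Scope classical_set_scope.
Local Open Scope ring_scope.

Section piecewise_derivative.
Context {R : realType}.
Implicit Types (f g k : R -> R) (c d x : R).

Lemma is_derive_glue {f g k c d} :
  (forall x, x <= c -> f x = g x) -> (forall x, c <= x -> f x = k x) ->
  is_derive c 1 g d -> is_derive c 1 k d -> is_derive c 1 f d.
Proof.
move=> fg fk [dg <-] [dk dkg].
pose q (u : R -> R) h := h^-1 *: ((u \o shift c) (h *: 1) - u c).
have qf : q f @ 0^' --> 'D_1 g c.
  apply: (@cvg_at_right_left_dnbhs R R^o).
  - have qk : q k @ 0^'+ --> 'D_1 g c by rewrite -dkg; exact: cvg_dnbhs_at_right dk.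
    apply: cvg_trans qk; apply: near_eq_cvg; near=> h; rewrite /q /= !fk ?lexx //.
    by rewrite [_%:A]mulr1 lerDr; near: h; exact: nbhs_right_ge.
  - have qg : q g @ 0^'- --> 'D_1 g c by exact: cvg_dnbhs_at_left dg.
    apply: cvg_trans qg; apply: near_eq_cvg; near=> h; rewrite /q /= !fg ?lexx //.
    by rewrite [_%:A]mulr1 gerDr; near: h; exact: nbhs_left_le.
have df : derivable f c 1 by apply/cvg_ex; exists ('D_1 g c).
by apply: DeriveDef => //; exact: cvg_lim qf.
Unshelve. all: by end_near. Qed.

Lemma is_derive_piecewise {f g k} {g' k' : R -> R} c :
  (forall x, x <= c -> f x = g x) -> (forall x, c <= x -> f x = k x) ->
  (forall x, is_derive x 1 g (g' x)) -> (forall x, is_derive x 1 k (k' x)) ->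
  g' c = k' c ->
  forall x, is_derive x 1 f (if x <= c then g' x else k' x).
Proof.
move=> fg fk dg dk gk x; case: ltgtP => [xc|cx|->].
- apply: near_eq_is_derive (dg x); near=> y; apply/esym/fg.
  by near: y; exact: lt_le_nbhsl.
- apply: near_eq_is_derive (dk x); near=> y; apply/esym/fk.
  by near: y; exact: lt_le_nbhsr.
- by apply: is_derive_glue fg fk _ _; rewrite ?gk.
Unshelve. all: by end_near. Qed.

End piecewise_derivative.

Section phi_derivable.
Context {R : realType}.
Implicit Types x : R.

Let phi_log x := ln (1 + x + x ^+ 2 / 2).
Let phi_cubic x := (32 / 1000) / 9 * (x - 19 / 2) ^+ 3 + 3 / 2 + ln 5.
Let phi_low x := if x <= 2 then phi_log x else phi_cubic x.

Let phi_log' x := (1 + x + x ^+ 2 / 2)^-1 * (1 + x).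
Let phi_cubic' x := (32 / 1000) / 9 * (3 * (x - 19 / 2) ^+ 2).
Let phi_low' x := if x <= 2 then phi_log' x else phi_cubic' x.

Let is_derive_phi_log x : is_derive x 1 phi_log (phi_log' x).
Proof.
apply: is_derive1_comp; last by apply: is_derive_eq; rewrite /GRing.scale /=; field.
by apply: is_derive1_ln; nra.
Qed.

Let is_derive_phi_cubic x : is_derive x 1 phi_cubic (phi_cubic' x).
Proof.
by rewrite /phi_cubic /phi_cubic'; apply: is_derive_eq; rewrite /GRing.scale /=; ring.
Qed.

Let is_derive_phi_low x : is_derive x 1 phi_low (phi_low' x).
Proof.
move: x; apply: (is_derive_piecewise 2 _ _ is_derive_phi_log is_derive_phi_cubic).
- by move=> y y2; rewrite /phi_low ifT.
- move=> y y2; rewrite /phi_low; case: ifPn => // y2'.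
  have -> : y = 2 by apply/eqP; rewrite eq_le y2 y2'.
  rewrite /phi_log /phi_cubic.
  have -> : 1 + 2 + 2 ^+ 2 / 2 = 5 :> R by rewrite expr2; lra.
  by rewrite !exprS expr0; lra.
- by rewrite /phi_log' /phi_cubic' !expr2; field.
Qed.

Lemma derivable_phi_pos x : derivable (@phi_pos R) x 1.
Proof.
suff dphi_pos (y : R) : is_derive y 1 (@phi_pos R) (if y <= 19 / 2 then phi_low' y else 0).
  by have [] := dphi_pos x.
move: y; apply: (is_derive_piecewise (19 / 2) (k := cst (3 / 2 + ln 5)) _ _
  is_derive_phi_low (fun y => is_derive_cst _ y 1)).
- by move=> y y3; rewrite /phi_pos /phi_low; case: ifP => // _; rewrite ifT.
- move=> y y3; rewrite /phi_pos; case: ifPn => [y2|_]; first lra.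
  case: ifPn => // y3'.
  have -> : y = 19 / 2 by apply/eqP; rewrite eq_le y3 y3'.
  by rewrite subrr expr0n /=; lra.
- by rewrite /phi_low' ifF ?/phi_cubic' ?subrr ?expr0n /= ?mulr0 //; lra.
Qed.

Lemma derivable_phi x : derivable (@phi R) x 1.
Proof.
have dphi_pos y := derivableP (derivable_phi_pos y).
have dphi_posN (y : R) : is_derive y 1 (fun z => - @phi_pos R (- z)) ('D_1 (@phi_pos R) (- y)).
  have := is_deriveN (is_derive1_comp (dphi_pos (- y)) (is_deriveNid y 1)).
  by rewrite mulrN1 opprK.
suff dphi (y : R) : is_derive y 1 (@phi R)
    (if y <= 0 then 'D_1 (@phi_pos R) (- y) else 'D_1 (@phi_pos R) y).
  by have [] := dphi x.
move: y; apply: (is_derive_piecewise 0 _ _ dphi_posN dphi_pos).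
- move=> y y0; rewrite /phi; case: ifPn => // y0'.
  have -> : y = 0 by apply/eqP; rewrite eq_le y0 y0'.
  by rewrite oppr0 /phi_pos ifT ?expr0n /= ?addr0 ?mul0r ?addr0 ?ln1 ?oppr0 //; lra.
- by move=> y y0; rewrite /phi ifT.
- by rewrite oppr0.
Qed.

Lemma derivable_phi_rho rho x : derivable (phi_rho rho) x 1.
Proof.
have drho : is_derive x 1 ( *%R rho) rho.
  by apply: is_derive_eq; rewrite /GRing.scale /=; ring.
by have [] := is_deriveZ rho^-1 (is_derive1_comp (derivableP (derivable_phi _)) drho).
Qed.

End phi_derivable.

Section periodic_integrable.
Context {R : realType}.
Local Notation mu := (@lebesgue_measure R).

Let measurable_addr (c : R) : measurable_fun (T := measurableTypeR R)
  (U := measurableTypeR R) [set: R] (fun x : R => x + c).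
Proof. exact: (measurable_funD (f := id) (g := cst c)). Qed.

Let mu_shift (c : R) : {measure set (measurableTypeR R) -> \bar R} :=
  measure_function_pushforward__canonical__measure_function_Measure mu (measurable_addr c).

Lemma lebesgue_measure_shift (c : R) (A : set (measurableTypeR R)) : measurable A ->
  pushforward mu (fun x => x + c) A = mu A.
Proof.
move=> mA; apply/esym; apply: (@lebesgue_measure_unique R (mu_shift c)) => //.
move=> _ [[a b]] _ <- /=; rewrite /pushforward.
have -> : (fun x => x + c) @^-1` `]a, b] = `]a - c, b - c]%classic.
  by apply/seteqP; split => x /=; rewrite !in_itv /= => /andP[? ?]; apply/andP; split; lra.
rewrite !lebesgue_measure_itv /= !lte_fin ltrD2r.
by case: ifP => // _; rewrite -EFinD; congr EFin; ring.
Qed.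

Lemma integrable_shift (c : R) (F : measurableTypeR R -> \bar R) :
  measurable_fun [set: measurableTypeR R] F ->
  mu.-integrable [set: measurableTypeR R] (fun x => F (x + c)) ->
  mu.-integrable [set: measurableTypeR R] F.
Proof.
move=> mF iF; have := @integrable_pushforward _ _ _ _ R _ (measurable_addr c) mu setT F mF.
rewrite preimage_setT => /(_ iF measurableT) /integrableP[_ iFc].
apply/integrableP; split => //.
rewrite (eq_measure_integral (mu_shift c)) //.
by move=> A mA _ /=; apply/esym; exact: lebesgue_measure_shift.
Qed.

Lemma integrable_translate (c a b : R) (f : measurableTypeR R -> \bar R) :
  mu.-integrable `[a, b] f -> mu.-integrable `[a + c, b + c] (fun x => f (x - c)).
Proof.
(* f is only known to be measurable on [a, b], so translate its zero extension. *)
move=> /(integrable_mkcond f (measurable_itv `[a, b])) if0.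
apply/(@integrable_mkcond _ _ _ mu _ (fun x => f (x - c))
  (measurable_itv `[a + c, b + c])).
have mf0 : measurable_fun [set: measurableTypeR R] (f \_ `[a, b]).
  by case/integrableP: if0.
set fc := fun x : R => (f \_ `[a, b]) (x - c).
have mfc : measurable_fun [set: measurableTypeR R] fc.
  exact: measurableT_comp mf0 (measurable_addr (- c)).
have ifc : mu.-integrable [set: measurableTypeR R] fc.
  apply: (integrable_shift c _ mfc).
  by apply: (eq_integrable measurableT _ _ _ if0) => x _; rewrite /fc addrK.
apply: (eq_integrable measurableT _ _ _ ifc) => x _.
rewrite /fc /patch; congr (if _ then _ else _).
by apply/idP/idP; rewrite !mem_setE !in_itv /= => /andP[? ?]; apply/andP; split; lra.
Qed.

Lemma integrable_setU {d} {T : measurableType d} {nu : {measure set T -> \bar R}}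
    {A B : set T} {f : T -> \bar R} :
  measurable A -> measurable B -> [disjoint A & B] ->
  nu.-integrable A f -> nu.-integrable B f -> nu.-integrable (A `|` B) f.
Proof.
move=> mA mB AB /(integrable_mkcond _ mA) iA /(integrable_mkcond _ mB) iB.
apply/(integrable_mkcond _ (measurableU _ _ mA mB)).
apply: (eq_integrable measurableT _ _ _ (integrableD measurableT iA iB)) => x _ /=.
rewrite /patch; have [xA|xA] := boolP (x \in A); have [xB|xB] := boolP (x \in B).
- by exfalso; apply: (elimT disj_setPS AB x); split; exact: set_mem.
- by rewrite mem_set ?adde0 //; left; exact: set_mem.
- by rewrite mem_set ?add0e //; right; exact: set_mem.
- by rewrite memNset ?adde0 // => -[] /mem_set; apply/negP.
Qed.

Lemma integrable_periodic (g : R -> R) (T : R) (n : nat) : 0 < T -> periodic g T ->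
  mu.-integrable `[0, T] (EFin \o g) -> mu.-integrable `[0, n%:R * T] (EFin \o g).
Proof.
move=> T0 gT ig; elim: n => [|n IH].
  apply: (integrableS _ _ _ ig); [exact: measurable_itv|exact: measurable_itv|].
  by move=> x /=; rewrite !in_itv /= mul0r => /andP[? ?]; apply/andP; split; lra.
have ign : mu.-integrable `[n%:R * T, n%:R * T + T] (EFin \o g).
  have := integrable_translate (n%:R * T) 0 T (EFin \o g) ig; rewrite add0r addrC.
  apply: eq_integrable; first exact: measurable_itv.
  by move=> x _ /=; rewrite mulr_natl -(periodicn gT n (x - T *+ n)) subrK.
have nT0 : 0 <= n%:R * T by rewrite mulr_ge0 // ltW.
have -> : `[0, n.+1%:R * T]%classic =
    `[0, n%:R * T] `|` `]n%:R * T, n%:R * T + T]%classic :> set R.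
  apply/seteqP; split => x /=; rewrite !in_itv /= mulrSr mulrDl mul1r.
    by move=> /andP[? ?]; case: (leP x (n%:R * T)) => ?; [left|right]; apply/andP; split; lra.
  by move=> [|] /andP[? ?]; apply/andP; split; lra.
apply: (integrable_setU _ _ _ IH); [exact: measurable_itv|exact: measurable_itv| |].
- by apply/disj_setPS => x /= []; rewrite !in_itv /= => /andP[? ?] /andP[? ?]; lra.
- apply: (integrableS _ _ _ ign); [exact: measurable_itv|exact: measurable_itv|].
  by move=> x /=; rewrite !in_itv /= => /andP[? ?]; apply/andP; split; lra.
Qed.

End periodic_integrable.

Section directional_derivative.
Context {R : numFieldType} {V W : normedModType R}.
Implicit Types (f : V -> W) (a v : V).

Lemma derive_line f a v : 'D_v f a = 'D_1 (fun h : R => f (h *: v + a)) 0.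
Proof.
rewrite /derive; set q1 := fun h => h^-1 *: _; set q2 := fun h => h^-1 *: _.
suff -> : q1 = q2 by [].
by apply/funext => h; rewrite /q1 /q2 /= addr0 scale0r add0r [_%:A]mulr1.
Qed.

Lemma is_derive_lineP {f a v} {df : W} :
  is_derive a v f df <-> is_derive (0 : R) 1 (fun h : R => f (h *: v + a)) df.
Proof.
split=> -[fv <-]; apply: DeriveDef; rewrite ?[in RHS]derive_line ?[in LHS]derive_line //.
- exact: (iffLR (derivable1P _ _ _) fv).
- exact: (iffRL (derivable1P _ _ _) fv).
Qed.

Lemma near_line a v {P : V -> Prop} :
  (\forall x \near a, P x) -> \forall s \near (0 : R), P (s *: v + a).
Proof.
have : (fun s : R => s *: v + a) @ (0 : R) --> 0 *: v + a.
  apply: (@cvgD _ _ _ _ (nbhs_filter (0 : R))); last exact: cvg_cst.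
  by apply: (@cvgZ _ _ _ _ (nbhs_filter (0 : R))); [exact: cvg_id|exact: cvg_cst].
by rewrite scale0r add0r => line_a; exact: line_a.
Qed.

Lemma is_derive_sum_seq (I : eqType) (s : seq I) (F : I -> V -> W) (dF : I -> W) a v :
  (forall i, i \in s -> is_derive a v (F i) (dF i)) ->
  is_derive a v (fun x => \sum_(i <- s) F i x) (\sum_(i <- s) dF i).
Proof.
elim: s => [|i s IH] dFs.
  under eq_fun do rewrite big_nil.
  by rewrite big_nil; exact: is_derive_cst.
under eq_fun do rewrite big_cons.
rewrite big_cons; apply: is_deriveD; first by apply: dFs; rewrite mem_head.
by apply: IH => j js; apply: dFs; rewrite in_cons js orbT.
Qed.

End directional_derivative.

Section logNHP_derivative.
Context {R : realType} {H : nat} (kappa : 'I_H -> R -> R).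

Lemma intensity_line (B v : 'rV[R]_H) (s t : R) :
  intensity kappa (s *: v + B) t = intensity kappa B t + s * intensity kappa v t.
Proof.
rewrite /intensity mulr_sumr -big_split /=; apply: eq_bigr => h _.
by rewrite !mxE; ring.
Qed.

Lemma integrable_intensity (D : set (measurableTypeR R)) (B : 'rV[R]_H) :
  measurable D -> (forall h, lebesgue_measure.-integrable D (EFin \o kappa h)) ->
  lebesgue_measure.-integrable D (EFin \o intensity kappa B).
Proof.
move=> mD ik.
apply: (eq_integrable mD (fun x => \sum_(h < H) (B ord0 h)%:E * (kappa h x)%:E)%E).
  by move=> x _ /=; rewrite /intensity -sumEFin; apply: eq_bigr => h _; rewrite EFinM.
by apply: integrable_sum => // h _; exact: (integrableZl mD (B ord0 h) (ik h)).
Qed.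

Lemma is_derive_logNHP (T : R) (L : nat) (S : seq R) (B v : 'rV[R]_H) :
  (forall h, lebesgue_measure.-integrable `[0, L%:R * T] (EFin \o kappa h)) ->
  (forall t, t \in S -> 0 < intensity kappa B t) ->
  is_derive B v (logNHP kappa T L S)
    (\sum_(t <- S) intensity kappa v t / intensity kappa B t
     - \int[lebesgue_measure]_(x in `[0, L%:R * T]) intensity kappa v x).
Proof.
move=> ik B_gt0; apply/is_derive_lineP.
have mI : measurable (`[0, L%:R * T] : set (measurableTypeR R)) by exact: measurable_itv.
set I0 := \int[lebesgue_measure]_(x in `[0, L%:R * T]) intensity kappa B x.
set J := \int[lebesgue_measure]_(x in `[0, L%:R * T]) intensity kappa v x.
have -> : (fun s => logNHP kappa T L S (s *: v + B)) =
    (fun s => \sum_(t <- S) ln (intensity kappa B t + s * intensity kappa v t))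
    - (fun s => I0 + s * J).
  apply/funext => s; rewrite /logNHP /=.
  under eq_bigr do rewrite intensity_line.
  congr (_ - _); under eq_Rintegral do rewrite intensity_line.
  have iI (w : 'rV[R]_H) := integrable_intensity _ w mI ik.
  rewrite RintegralD ?RintegralZl //.
  by apply: (eq_integrable mI _ _ _ (integrableZl mI s (iI v))) => x _; rewrite /= EFinM.
apply: is_deriveB; last first.
  by apply: is_derive_eq; rewrite /GRing.scale /=; ring.
apply: is_derive_sum_seq => t tS.
set g := fun s : R => intensity kappa B t + s * intensity kappa v t.
have dg : is_derive (0 : R) 1 g (intensity kappa v t).
  by apply: is_derive_eq; rewrite /GRing.scale /=; ring.
have dln : is_derive (g 0) 1 (@ln R) (intensity kappa B t)^-1.
  by rewrite /g mul0r addr0; exact: is_derive1_ln (B_gt0 t tS).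
by rewrite mulrC; exact: is_derive1_comp dln dg.
Qed.

End logNHP_derivative.

Lemma est_eq_implicit_derive {R : realType} {N : nat} (rho : R) (r : 'I_N -> R)
    (L : 'I_N -> nat) {l : 'I_N -> R -> R} {m : R -> R} {dl : 'I_N -> R} {dm s0 : R} :
  (forall n, (0 < L n)%N) ->
  (forall n, is_derive s0 1 (l n) (dl n)) -> is_derive s0 1 m dm ->
  (\forall s \near s0, est_eq rho r L (fun n => l n s) (m s) = 0) ->
  let w n := derive1 (phi_rho rho) (l n s0 / (L n)%:R - m s0) in
  dm * \sum_(n < N) r n * w n * (L n)%:R = \sum_(n < N) r n * w n * dl n.
Proof.
move=> L_gt0 dln dmn est0 w.
pose a n s := l n s / (L n)%:R - m s.
have da n : is_derive s0 1 (a n) (dl n / (L n)%:R - dm).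
  have -> : a n = (L n)%:R^-1 \*: l n - m.
    by apply/funext => s; rewrite /a /= mulrC.
  by apply: is_derive_eq; rewrite mulrC.
have dterm n : is_derive s0 1 (fun s => r n * (L n)%:R * phi_rho rho (a n s))
    (r n * (L n)%:R * (w n * (dl n / (L n)%:R - dm))).
  have dphi := is_derive1_comp (derivableP (derivable_phi_rho rho (a n s0))) (da n).
  by have := is_deriveZ (r n * (L n)%:R) dphi; rewrite /w derive1E.
have := is_derive_sum dterm; rewrite fct_sumE => dsum.
have dsum0 : \sum_(n < N) r n * (L n)%:R * (w n * (dl n / (L n)%:R - dm)) = 0.
  have [_ <-] := near_eq_is_derive (est0 : \near s0, _ = cst 0 s0) dsum.
  exact: derive_cst.
rewrite mulr_sumr; apply/esym/subr0_eq; rewrite -[RHS]dsum0 -sumrB.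
apply: eq_bigr => n _.
have Ln : (L n)%:R != 0 :> R by rewrite pnatr_eq0 -lt0n L_gt0.
by field.
Qed.

Theorem proposition2 (R : realType) (N H : nat) (T rho : R)
  (kappa : 'I_H -> R -> R) (S : 'I_N -> seq R) (L : 'I_N -> nat)
  (r : 'I_N -> R) (muhat : 'rV[R]_H -> R) (B0 : 'rV[R]_H) :
  0 < T -> 0 < rho ->
  (forall n, (0 < L n)%N) ->
  (forall n, 0 <= r n) ->
  (forall n ti, ti \in S n -> 0 <= ti <= (L n)%:R * T) ->
  (forall h t, kappa h (t + T) = kappa h t) ->
  (forall h, lebesgue_measure.-integrable `[0, T] (EFin \o kappa h)) ->
  (forall n ti, ti \in S n -> 0 < intensity kappa B0 ti) ->
  (\forall B \near B0,
     est_eq rho r L (fun n => logNHP kappa T (L n) (S n) B) (muhat B) = 0) ->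
  (forall h : 'I_H, derivable muhat B0 (delta_mx ord0 h)) ->
  let w n := derive1 (phi_rho rho)
               (logNHP kappa T (L n) (S n) B0 / (L n)%:R - muhat B0) in
  let D := \sum_(n < N) r n * w n * (L n)%:R in
  D != 0 ->
  forall h : 'I_H,
    'D_(delta_mx ord0 h) muhat B0 =
    \sum_(n < N) (r n * w n / D) *
       'D_(delta_mx ord0 h) (logNHP kappa T (L n) (S n)) B0.
Proof.
move=> T_gt0 _ L_gt0 _ _ kappa_periodic kappa_int B0_pos est0 dmuhat w D D_neq0 h.
set v := delta_mx ord0 h.
have kappa_int_L n h' : lebesgue_measure.-integrable `[0, (L n)%:R * T] (EFin \o kappa h').
  exact: integrable_periodic (L n) T_gt0 (kappa_periodic h') (kappa_int h').
have dlogNHP n : derivable (logNHP kappa T (L n) (S n)) B0 v.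
  by have [] := is_derive_logNHP kappa T (L n) (S n) B0 v (kappa_int_L n) (B0_pos n).
have := est_eq_implicit_derive rho r L L_gt0
  (fun n => is_derive_lineP.1 (derivableP (dlogNHP n)))
  (is_derive_lineP.1 (derivableP (dmuhat h))) (near_line B0 v est0).
rewrite /= scale0r add0r -/w -/D => eqD.
apply: (mulIf D_neq0); rewrite eqD mulr_suml; apply: eq_bigr => n _.
by rewrite [RHS]mulrAC divfK.
Qed.
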